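(* Let $T$ be a tournament, let $v\in V(T)$ and let $c\in\mathbb{N}$ with $c\ge 2$. Suppose that $d^+_T(v)\ge 2^{c-1}$. Then there exist disjoint sets $B,E\subseteq V(T)$ and a vertex $b\in B$ such that: (i) $2\le |B|\le c$ and $T[B]$ is a transitive tournament with sink $b$ and source $v$; (ii) $B\setminus\{b\}$ in-dominates $V(T)\setminus(B\cup E)$; (iii) $|E|\le (1/2)^{c-2} d^+_T(v)$.
   Context: $d^+_T(v)$ is the out-degree of $v$ in $T$. A tournament is transitive if its vertices can be enumerated $v_1,\dots,v_m$ so that $v_iv_j$ is an edge iff $i<j$; then $v_1$ is its source and $v_m$ its sink. A set $B$ in-dominates a set $C$ if for every $x\in C$ there is $b'\in B$ with $xb'\in E(T)$. *)

From mathcomp Require Import all_boot.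
Set Implicit Arguments. Unset Strict Implicit. Unset Printing Implicit Defensive.

Definition tournament (V : finType) (T : rel V) : Prop :=
  (forall x, ~~ T x x) /\
  (forall x y, x != y -> (T x y || T y x)) /\
  (forall x y, T x y -> ~~ T y x).

Definition outdeg (V : finType) (T : rel V) (v : V) : nat :=
  #|[set y | T v y]|.

(* T[B] is transitive: B's vertices can be enumerated v_1..v_m (the sequence s)
   so that v_i v_j is an edge iff i < j; source v_1 = src, sink v_m = snk. *)
Definition transitive_src_sink (V : finType) (T : rel V) (B : {set V})
  (src snk : V) : Prop :=
  exists s : seq V,
    [/\ uniq s, [set x in s] = B,
        (forall i j, i < size s -> j < size s ->
           T (nth src s i) (nth src s j) = (i < j)),
        head snk s = src & last src s = snk].

Definition in_dominates (V : finType) (T : rel V) (B C : {set V}) : Prop :=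
  forall x, x \in C -> exists2 b', b' \in B & T x b'.

(* Grow greedily a transitive chain v = b_0 -> ... -> b_k together with a set
   S of common out-neighbours of the chain, such that every vertex outside the
   chain and S beats some chain vertex, and 2^k |S| <= d^+(v).  Inside the
   tournament T[S] the average out-degree is (|S| - 1)/2 and at most one vertex
   has out-degree 0, so some w in S has 0 < d^+_S(w) <= |S|/2: appending w and
   replacing S by its out-neighbourhood in S keeps the invariant.  Once
   2^(c-2) |S| <= d^+(v), any u in S closes the chain as its sink, with
   E = S - u; the invariant forces this to happen before the chain exceeds c. *)

From mathcomp Require Import all_boot zify.
Set Implicit Arguments. Unset Strict Implicit. Unset Printing Implicit Defensive.

Section Tournament.
Variables (V : finType) (T : rel V).
Hypothesis tT : tournament T.

Let irrT : irreflexive T := fun x => negbTE (tT.1 x).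

Lemma tournament_edgeE x y : T x y + T y x = (x != y :> V).
Proof.
case: eqVneq => [->|neq]; first by rewrite irrT.
have := tT.2.1 x y neq; have := tT.2.2 x y.
by case: (T x y); case: (T y x) => // /(_ isT).
Qed.

Definition outdeg_in (S : {set V}) (u : V) : nat := #|[set x in S | T u x]|.

Lemma outdeg_inE (S : {set V}) u : outdeg_in S u = \sum_(x in S) T u x.
Proof. by rewrite /outdeg_in -sum1dep_card big_mkcondr. Qed.

Lemma sum_neq (S : {set V}) u : u \in S -> \sum_(x in S) (x != u) = (#|S|).-1.
Proof.
move=> uS; rewrite (bigD1 u) //= eqxx -sum1_card [in RHS](bigD1 u) //=.
by apply: eq_bigr => x /andP[_ ->].
Qed.

Lemma sum_outdeg_in (S : {set V}) :
  2 * \sum_(u in S) outdeg_in S u = #|S| * (#|S|).-1.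
Proof.
under eq_bigr do rewrite outdeg_inE.
rewrite mul2n -addnn {2}exchange_big -big_split /= -sum_nat_const.
apply: eq_bigr => u uS; rewrite -big_split /= -(sum_neq uS).
by apply: eq_bigr => x _; rewrite tournament_edgeE eq_sym.
Qed.

Lemma outdeg_in_pos_but_one (S : {set V}) : S != set0 ->
  exists2 z, z \in S & {in S, forall u, u != z -> 0 < outdeg_in S u}.
Proof.
case: (pickP [pred z in S | outdeg_in S z == 0]) => [z /andP[zS /eqP z0] _ | pos].
  exists z => // u uS uz; rewrite card_gt0; apply/set0Pn; exists z.
  have Tzu : T z u = false.
    by have := in_set0 u; rewrite -(cards0_eq z0) inE uS.
  by have := tournament_edgeE z u; rewrite Tzu eq_sym uz inE zS; case: (T u z).
case/set0Pn=> z zS; exists z => // u uS _.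
by have := pos u; rewrite /= uS lt0n => /negbT.
Qed.

Lemma exists_small_outdeg_in (S : {set V}) : 2 <= #|S| ->
  exists w, [/\ w \in S, 0 < outdeg_in S w & 2 * outdeg_in S w <= #|S|].
Proof.
move=> S2; have [|z zS zpos] := @outdeg_in_pos_but_one S.
  by rewrite -card_gt0; apply: leq_trans S2.
case: (boolP [exists w in S, (0 < outdeg_in S w) && (2 * outdeg_in S w <= #|S|)]).
  by case/exists_inP=> w wS /andP[]; exists w.
move/exists_inPn=> big.
have: \sum_(u in S) (u != z) * #|S|.+1 <= 2 * \sum_(u in S) outdeg_in S u.
  rewrite big_distrr leq_sum //= => u uS; case: eqVneq => [_|uz] //=.
  by have := big u uS; rewrite zpos //= -ltnNge mul1n.
rewrite -big_distrl sum_neq // sum_outdeg_in [X in _ <= X]mulnC.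
by rewrite leq_pmul2l ?ltnn //; lia.
Qed.

Lemma pairwise_transitive_src_sink x (t : seq V) :
  pairwise T (x :: t) -> transitive_src_sink T [set y in x :: t] x (last x t).
Proof.
move=> pw; have /(pairwiseP x) chain := pw; exists (x :: t); split => //.
  exact: pairwise_uniq irrT pw.
move=> i j ilt jlt; case: ltngtP => [ij|ji|->]; first exact: chain.
  by apply/negbTE/tT.2.2/chain.
exact: irrT.
Qed.

Definition chain_state (s : seq V) (S : {set V}) : Prop :=
  [/\ pairwise T s, {in s & S, forall y x, T y x}
    & in_dominates T [set x in s] (~: ([set x in s] :|: S))].

Lemma chain_state_notin s S u : chain_state s S -> u \in S -> u \notin s.
Proof.
by case=> _ beats _ uS; apply/negP => us; have := beats u u us uS; rewrite irrT.
Qed.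

Lemma chain_state_rcons s S w : chain_state s S -> w \in S ->
  chain_state (rcons s w) [set x in S | T w x].
Proof.
move=> st wS; case: st => chain beats dom; split.
- by rewrite pairwise_rcons chain andbT; apply/allP => y ys; apply: beats.
- move=> y x; rewrite mem_rcons inE inE => /predU1P[-> | ys] /andP[xS Twx] //.
  exact: beats.
- move=> x; rewrite !inE mem_rcons inE !negb_or => /andP[/andP[xw xs] xS'].
  case xS: (x \in S).
    exists w; first by rewrite inE mem_rcons mem_head.
    have := tournament_edgeE x w; rewrite xw; move: xS'; rewrite xS /=.
    by move=> /negbTE ->; case: (T x w).
  have [|y ys Txy] := dom x; first by rewrite !inE negb_or xS andbT.
  by exists y => //; rewrite inE in ys; rewrite inE mem_rcons in_cons ys orbT.
Qed.

Lemma chain_state_init v : chain_state [:: v] [set y | T v y].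
Proof.
split => // [y x | x]; first by rewrite mem_seq1 => /eqP-> ; rewrite inE.
rewrite !inE negb_or => /andP[xv Tvx]; exists v; first by rewrite inE mem_head.
by have := tournament_edgeE x v; rewrite xv (negbTE Tvx); case: (T x v).
Qed.

Section Extension.
Variables (v : V) (c : nat).
Hypothesis deg_v : 2 ^ c.-1 <= outdeg T v.

Definition dominating_chain (B E : {set V}) (b : V) : Prop :=
  [/\ [disjoint B & E], b \in B,
      (2 <= #|B| <= c) /\ transitive_src_sink T B v b,
      in_dominates T (B :\ b) (~: (B :|: E))
    & 2 ^ (c - 2) * #|E| <= outdeg T v].

Lemma dominating_chain_stop t S u : chain_state (v :: t) S -> u \in S ->
  size t + 2 <= c -> 2 ^ (c - 2) * #|S| <= outdeg T v ->
  dominating_chain [set x in rcons (v :: t) u] (S :\ u) u.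
Proof.
move=> st uS tc bound; have us := chain_state_notin st uS.
case: (st) => chain beats dom.
have pw : pairwise T (rcons (v :: t) u).
  by rewrite pairwise_rcons chain andbT; apply/allP => y ys; apply: beats.
have chain_u : [set x in rcons (v :: t) u] :\ u = [set x in v :: t].
  apply/setP => x; rewrite in_setD1 !in_set mem_rcons in_cons.
  by case: eqVneq => [->|]; rewrite ?(negbTE us).
have chain_S : [set x in rcons (v :: t) u] :|: S :\ u = [set x in v :: t] :|: S.
  apply/setP => x; rewrite !in_setU in_setD1 !in_set mem_rcons in_cons.
  by case: eqVneq => [->|]; rewrite ?uS ?orbT.
split.
- rewrite disjoint_subset; apply/subsetP => x.
  rewrite inE mem_rcons in_cons !inE negb_and negbK => /predU1P[-> | xs].
    by rewrite eqxx.
  by apply/orP; right; apply: contraL xs => /(chain_state_notin st).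
- by rewrite inE mem_rcons mem_head.
- split; last by have := pairwise_transitive_src_sink pw; rewrite last_rcons.
  by rewrite cardsE (card_uniqP (pairwise_uniq irrT pw)) size_rcons /=; lia.
- by rewrite chain_u chain_S.
- by apply: leq_trans bound; rewrite leq_mul2l (subset_leq_card (subD1set S u)) orbT.
Qed.

Lemma chain_state_extend t S : chain_state (v :: t) S -> 0 < #|S| ->
  size t + 2 <= c -> 2 ^ size t * #|S| <= outdeg T v ->
  exists B E b, dominating_chain B E b.
Proof.
have [n] := ubnP #|S|; elim: n => // n IH in t S *; rewrite ltnS => leSn.
move=> st S0 tc bound; have [u uS] := card_gt0P S0.
case: (leqP (2 ^ (c - 2) * #|S|) (outdeg T v)) => [stop | big].
  by exists [set x in rcons (v :: t) u], (S :\ u), u; apply: dominating_chain_stop.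
have t_lt : size t < c - 2.
  by rewrite -(ltn_exp2l _ _ (ltnSn 1)) -(ltn_pmul2r S0) (leq_ltn_trans bound).
have S2 : 2 < #|S|.
  have c_exp : 2 ^ c.-1 = 2 ^ (c - 2) * 2 by rewrite -expnSr; congr (2 ^ _); lia.
  have pos : 0 < 2 ^ (c - 2) by rewrite expn_gt0.
  by rewrite -(ltn_pmul2l pos) -c_exp (leq_ltn_trans deg_v big).
have [w [wS w0 w_half]] := exists_small_outdeg_in (ltnW S2).
apply: (IH (rcons t w) [set x in S | T w x]).
- by apply: leq_trans leSn; rewrite -/(outdeg_in S w); lia.
- exact: chain_state_rcons st wS.
- exact: w0.
- by rewrite size_rcons; lia.
- by apply: leq_trans bound; rewrite size_rcons expnS -mulnA mulnCA leq_mul2l w_half orbT.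
Qed.

End Extension.

End Tournament.

Theorem lemma2p4 (V : finType) (T : rel V) (v : V) (c : nat) :
  tournament T -> 2 <= c -> 2 ^ c.-1 <= outdeg T v ->
  exists (B E : {set V}) (b : V),
    [/\ [disjoint B & E], b \in B,
        (2 <= #|B| <= c) /\ transitive_src_sink T B v b,
        in_dominates T (B :\ b) (~: (B :|: E))
      & 2 ^ (c - 2) * #|E| <= outdeg T v].
Proof.
move=> tT c2 deg_v.
apply: (chain_state_extend tT deg_v (chain_state_init tT v)) => //.
- by apply: leq_trans deg_v; rewrite expn_gt0.
- by rewrite mul1n.
Qed.
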